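(* Let $X=X_1\times\cdots\times X_n$ be a finite product space, $\theta:X\to\mathbb{R}\cup\{-\infty\}$ a potential function with $Z=\sum_x\exp(\theta(x))>0$, and $p(x)=\exp(\theta(x))/Z$ the Gibbs distribution. Let $\{\gamma_i(x_i)\}_{i,\,x_i\in X_i}$ be i.i.d. random variables following the zero-mean Gumbel distribution. Consider the following procedure (one pass): for $j=1,\dots,n$, with $x_1,\dots,x_{j-1}$ already fixed, set for each $x_j\in X_j$ $$p_j(x_j)=\frac{\exp\big(E_\gamma\big[\max_{x_{j+1},\dots,x_n}\{\theta(x)+\sum_{i=j+1}^n\gamma_i(x_i)\}\big]\big)}{\exp\big(E_\gamma\big[\max_{x_j,\dots,x_n}\{\theta(x)+\sum_{i=j}^n\gamma_i(x_i)\}\big]\big)},$$ set $p_j(r)=1-\sum_{x_j}p_j(x_j)$ for an extra symbol $r$, and sample an element from $p_j(\cdot)$; if $r$ is sampled the pass rejects (and the algorithm restarts with $j=1$), otherwise the sampled $x_j$ is fixed and the iteration continues; if the pass reaches $j=n$ without rejection, it accepts and outputs $(x_1,\dots,x_n)$. Then for every $x\in X$, $$P\big[\text{the algorithm outputs }x\;\big|\;\text{the algorithm accepts}\big]=p(x).$$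
   Context: The zero-mean Gumbel distribution is the distribution with cumulative distribution function $F(t)=\exp(-\exp(-(t+c)))$, where $c$ is the Euler constant. The expectations $E_\gamma$ in $p_j$ are exact expectations over the Gumbel perturbations (the quantities $p_j(\cdot)$ are deterministic given $x_1,\dots,x_{j-1}$); the only randomness in the procedure is the sampling from $p_j(\cdot)$. *)

From HB Require Import structures.
From mathcomp Require Import all_boot all_order all_algebra.
From mathcomp Require Import all_classical all_reals all_analysis.
Set Implicit Arguments. Unset Strict Implicit. Unset Printing Implicit Defensive.
Import Order.TTheory GRing.Theory Num.Theory.
Import numFieldNormedType.Exports.
Local Open Scope classical_set_scope.
Local Open Scope ring_scope.

Definition euler_gamma {R : realType} : R :=
  limn (fun n : nat => \sum_(1 <= k < n.+1) (k%:R : R)^-1 - ln (n%:R : R)).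

Definition gumbel_cdf {R : realType} (t : R) : R :=
  expR (- expR (- (t + euler_gamma))).

Section gumbel_cumulative.
Context {R : realType}.

Let gumbel_nd : nondecreasing (@gumbel_cdf R).
Proof.
move=> x y xy; rewrite /gumbel_cdf ler_expR lerN2 ler_expR lerN2 lerD2r //.
Qed.

Let gumbel_rc : right_continuous (@gumbel_cdf R).
Proof.
apply: right_continuousW => x; rewrite /gumbel_cdf.
apply: continuous_comp; last exact: continuous_expR.
apply: continuousN; apply: continuous_comp; last exact: continuous_expR.
apply: continuousN; apply: continuousD; [exact: cvg_id | exact: cvg_cst].
Qed.

HB.instance Definition _ := isCumulative.Build R _ R (@gumbel_cdf R)
  gumbel_nd gumbel_rc.
End gumbel_cumulative.

Definition gumbel_law (R : realType) := lebesgue_stieltjes_measure (@gumbel_cdf R).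

Local Open Scope ereal_scope.

(* Exact expectation over independent Gumbel perturbations g : I -> R
   (one per index of the finite type I), as iterated integrals against the
   Gumbel law (i.e. integration against the product law). *)
Fixpoint iter_gumbel_E {R : realType} (I : finType) (s : seq I)
    (F : (I -> R) -> \bar R) (g : I -> R) : \bar R :=
  match s with
  | [::] => F g
  | k :: s' => \int[@gumbel_law R]_t
                 iter_gumbel_E s' F (fun i => if i == k then t else g i)
  end.

Definition gumbel_E {R : realType} (I : finType) (F : (I -> R) -> \bar R) : \bar R :=
  iter_gumbel_E (enum I) F (fun _ => 0%R).

Definition expE {R : realType} (x : \bar R) : R := fine (expeR x).

Section gibbs_sampling.
Context {R : realType} (n : nat) (X : 'I_n -> finType).

Definition prodX := {dffun forall i : 'I_n, X i}.
(* Indices (i, x_i) of the Gumbel perturbations gamma_i(x_i). *)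
Definition gidx := {i : 'I_n & X i}.

Variable theta : prodX -> \bar R.

Definition Zpart : R := (\sum_(y : prodX) expE (theta y))%R.
Definition gibbs (x : prodX) : R := (expE (theta x) / Zpart)%R.

(* M x m = E_gamma[ max_{y : y_i = x_i for i < m} theta(y) + sum_{i >= m} gamma_i(y_i) ]
   (0-indexed coordinates: the first m coordinates are fixed to those of x). *)
Definition Mpert (x : prodX) (m : nat) : \bar R :=
  gumbel_E (fun g : gidx -> R =>
    \big[maxe/-oo]_(y : prodX | [forall i : 'I_n, (i < m)%N ==> (y i == x i)])
      (theta y + (\sum_(i : 'I_n | (m <= i)%N) (g (Tagged X (y i)))%:E))).

(* p_j(x_j) at (0-indexed) step j, given the prefix x_0..x_{j-1} of x,
   where x_j is the j-th coordinate of x. *)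
Definition pstep (x : prodX) (j : nat) : R :=
  (expE (Mpert x j.+1) / expE (Mpert x j))%R.

(* Probability that one pass does not reject and outputs x. *)
Definition pass_prob (x : prodX) : R := (\prod_(j < n) pstep x j)%R.

Definition accept_prob : R := (\sum_(y : prodX) pass_prob y)%R.

(* P[algorithm outputs x | algorithm accepts]: passes are i.i.d. restarts,
   so this equals P[pass outputs x] / P[pass accepts]. *)
Definition cond_output_prob (x : prodX) : R := (pass_prob x / accept_prob)%R.

End gibbs_sampling.

From HB Require Import structures.
From mathcomp Require Import all_boot all_order all_algebra.
From mathcomp Require Import all_classical all_reals all_analysis.
From mathcomp Require Import ring lra measurable_realfun.
Import numFieldNormedType.Exports.
Import Order.TTheory GRing.Theory Num.Theory.
Local Open Scope ring_scope.
Local Open Scope classical_set_scope.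

(* A pass telescopes. Writing M_j(x) for the expected perturbed maximum with
   the first j coordinates fixed to those of x, the step probabilities are
   p_j(x_j) = exp M_{j+1}(x) / exp M_j(x), so a pass outputs x with probability
   exp theta(x) / exp M_0, and M_0 does not depend on x. Conditioning on
   acceptance therefore divides by Z / exp M_0 and leaves the Gibbs distribution.
   The analytic input is that M_j(x) is a finite real whenever theta(x) is:
   the perturbed maximum stays within C + sum |gamma| of theta(x), and a Gumbel
   variable has a finite first absolute moment because its tails decay
   exponentially. *)

(* No measurability is needed: both integrals are suprema over simple functions
   below the positive and negative parts. *)
Lemma le_integral_pointwise {d} {T : measurableType d} {R : realType}
    {mu : set T -> \bar R} {D : set T} {f g : T -> \bar R} :
  (forall x, (f x <= g x)%E) ->
  (\int[mu]_(x in D) f x <= \int[mu]_(x in D) g x)%E.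
Proof.
move=> fg; have fgD x : x \in setT -> ((f \_ D) x <= (g \_ D) x)%E.
  by move=> _; rewrite /patch; case: ifP.
rewrite /integral; apply: leeB; apply: ereal_sup_le => _ [h /= hf <-];
  exists h => //= x; apply: le_trans (hf x) _.
- exact: (funepos_le fgD (in_setT x)).
- exact: (funeneg_le fgD (in_setT x)).
Qed.

Section gumbel_law.
Context {R : realType}.

Lemma gumbel_cdf_cvgy : @gumbel_cdf R @ +oo --> (1 : R).
Proof.
rewrite -expR0 -oppr0; apply: continuous_cvg; first exact: continuous_expR.
apply: cvgN; apply: (@cvg_comp _ _ _ (fun t => t + euler_gamma)
  (fun u => expR (- u))); [exact: cvg_addrr | exact: cvgr_expR].
Qed.

Lemma gumbel_cdf_cvgNy : @gumbel_cdf R @ -oo --> (0 : R).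
Proof.
apply/cvgNy_compNP.
have -> : @gumbel_cdf R \o -%R = (fun u => expR (- u)) \o (fun t => expR (t - euler_gamma)).
  by apply/funext => t; rewrite /gumbel_cdf /= opprD opprK.
apply: (cvg_comp _ _ _ (@cvgr_expR R)).
apply: (ger_cvgy _ (cvg_addrr (- euler_gamma))).
by near=> t; apply: le_trans (expR_ge1Dx _); rewrite lerDr.
Unshelve. all: end_near.
Qed.

HB.instance Definition _ := isCumulativeBounded.Build R 0 1 (@gumbel_cdf R)
  gumbel_cdf_cvgNy gumbel_cdf_cvgy.

Local Open Scope ereal_scope.

Lemma gumbel_law_setT : @gumbel_law R setT = 1.
Proof. exact: probability_setT. Qed.

Lemma gumbel_law_itvNy (b : R) : @gumbel_law R `]-oo, b] = (gumbel_cdf b)%:E.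
Proof.
have := cdf_lebesgue_stieltjes_id (@gumbel_cdf R) b.
by rewrite /cdf /distribution /pushforward preimage_id.
Qed.

Lemma gumbel_law_itvy (a : R) : @gumbel_law R `]a, +oo[ = (1 - gumbel_cdf a)%:E.
Proof.
have := probability_setC (@gumbel_law R) (measurable_itv `]-oo, a]%O).
rewrite setCitvl => setCE; apply: eq_trans setCE _.
by rewrite EFinB; congr (1 - _); exact: gumbel_law_itvNy.
Qed.
Local Close Scope ereal_scope.

Lemma gumbel_cdf_le (t : R) : gumbel_cdf t <= expR (t + euler_gamma - 1).
Proof.
rewrite /gumbel_cdf ler_expR.
have := expR_ge1Dx (- (t + @euler_gamma R)); lra.
Qed.

Lemma gumbel_ccdf_le (t : R) : 1 - gumbel_cdf t <= expR (- (t + euler_gamma)).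
Proof. rewrite /gumbel_cdf; have := expR_ge1Dx (- expR (- (t + @euler_gamma R))); lra. Qed.

Lemma expRNnat_le (k : nat) : expR (- k%:R) <= (2 ^+ k)^-1 :> R.
Proof.
rewrite expRN -[k%:R]mulr1 expRM_natl lef_pV2 ?posrE ?exprn_gt0 ?expR_gt0 //.
by rewrite lerXn2r ?nnegrE ?expR_ge0 // -[2]/(1 + 1) expR_ge1Dx.
Qed.

Lemma gumbel_abs_tail_bound (k : nat) :
  @gumbel_cdf R (1 - k%:R) + (1 - gumbel_cdf (k%:R - 1)) <=
  (expR euler_gamma + expR (1 - euler_gamma)) / 2 ^+ k.
Proof.
apply: le_trans (lerD (gumbel_cdf_le _) (gumbel_ccdf_le _)) _.
have -> : 1 - k%:R + euler_gamma - 1 = euler_gamma + - k%:R :> R by ring.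
have -> : - (k%:R - 1 + euler_gamma) = 1 - euler_gamma + - k%:R :> R by ring.
rewrite (expRD euler_gamma) (expRD (1 - euler_gamma)) mulrDl.
by apply: lerD; apply: ler_wpM2l (expRNnat_le k); exact: expR_ge0.
Qed.

Definition abs_tail (k : nat) : set R :=
  `]-oo, (1 - k%:R : R)[ `|` `](k%:R - 1 : R), +oo[.

Lemma measurable_abs_tail (k : nat) : measurable (abs_tail k).
Proof. by apply: measurableU; exact: measurable_itv. Qed.

Local Open Scope ereal_scope.

Lemma gumbel_law_abs_tail_le (k : nat) : @gumbel_law R (abs_tail k) <=
  ((expR euler_gamma + expR (1 - euler_gamma)) / 2 ^+ k)%:E.
Proof.
apply: (@le_trans _ _ (@gumbel_law R `]-oo, (1 - k%:R)%R]
                       + @gumbel_law R `](k%:R - 1)%R, +oo[)).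
  apply: le_trans (measureU2 _ _ _) _; try exact: measurable_itv.
  apply: leeD => //; apply: le_measure; rewrite ?inE; try exact: measurable_itv.
  by apply: subset_itvl; rewrite bnd_simp.
by rewrite gumbel_law_itvNy gumbel_law_itvy -EFinD lee_fin gumbel_abs_tail_bound.
Qed.

Lemma abs_le_abs_tail_series (t : R) :
  `|t|%:E <= \sum_(k <oo) (\1_(abs_tail k) t)%:E.
Proof.
apply: le_trans (nneseries_lim_ge (Num.trunc `|t|).+1 _); last first.
  by move=> k _; rewrite lee_fin indicE ler0n.
rewrite (@eq_big_nat _ _ _ 0 _ _ (fun=> 1%:E)); last first.
  move=> k /andP[_ kt]; rewrite indicE mem_set //.
  have : (k%:R <= `|t|)%R by rewrite -truncn_ge_nat // -ltnS.
  rewrite /abs_tail /= !in_itv /= andbT.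
  have [t0|t0] := leP 0%R t.
  - by rewrite ger0_norm // => ?; right; lra.
  - by rewrite ltr0_norm // => ?; left; lra.
by rewrite sumEFin lee_fin sumr_const_nat subn0 ltW // truncnS_gt.
Qed.

Lemma gumbel_abs_moment_lty : \int[@gumbel_law R]_t `|t|%:E < +oo.
Proof.
pose c : R := (expR euler_gamma + expR (1 - euler_gamma))%R.
apply: le_lt_trans
  (@le_integral_pointwise _ _ _ (@gumbel_law R) setT _ _ abs_le_abs_tail_series) _.
rewrite integral_nneseries //; last first.
  by move=> k; apply/measurable_EFinP/measurable_indic; exact: measurable_abs_tail.
have geom k : (c / 2 ^+ k = (2 * c) / (2 ^ (k + 1))%:R :> R)%R.
  by rewrite addn1 natrX exprS invfM mulrA [(2 * c)%R]mulrC mulfK // pnatr_eq0.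
apply: (@le_lt_trans _ _ (\sum_(k <oo) ((2 * c) / (2 ^ (k + 1))%:R)%:E)).
  apply: lee_nneseries => k _; first by move=> _; apply: integral_ge0 => t _; rewrite lee_fin.
  rewrite integral_indic ?setIT -?geom; [exact: gumbel_law_abs_tail_le|exact: measurableT|].
  exact: measurable_abs_tail.
have /cvg_lim series2c := @cvg_geometric_eseries_half R (2 * c)%R 0.
by rewrite /eseries in series2c; rewrite [X in X < _]series2c ?ltry.
Qed.

End gumbel_law.

Local Open Scope ereal_scope.

Section iter_gumbel_E.
Context {R : realType} {I : finType}.
Implicit Types (s : seq I) (F G : (I -> R) -> \bar R) (g : I -> R).

Lemma le_iter_gumbel_E s F G : (forall g, F g <= G g) ->
  forall g, iter_gumbel_E s F g <= iter_gumbel_E s G g.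
Proof.
elim: s F G => [|k s IH] F G FG g //=.
by apply: le_integral_pointwise => t; exact: IH.
Qed.

Lemma iter_gumbel_E_cst s (v : \bar R) g : iter_gumbel_E s (fun=> v) g = v.
Proof.
elim: s g => [|k s IH] g //=; under eq_integral do rewrite IH.
rewrite integral_cst // -[RHS]mule1; congr (_ * _); exact: gumbel_law_setT.
Qed.

Lemma iter_gumbel_E_ge0 s F : (forall g, 0 <= F g) ->
  forall g, 0 <= iter_gumbel_E s F g.
Proof. by move=> F0 g; rewrite -(iter_gumbel_E_cst s 0 g); exact: le_iter_gumbel_E. Qed.

Lemma iter_gumbel_EN s F : (forall g, 0 <= F g) ->
  forall g, iter_gumbel_E s (fun g => - F g) g = - iter_gumbel_E s F g.
Proof.
elim: s => [|k s IH] F0 g //=; under eq_integral do rewrite IH //.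
by rewrite integral_ge0N // => t _; exact: iter_gumbel_E_ge0.
Qed.

Definition gumbel_abs_mean : R := fine (\int[@gumbel_law R]_t `|t|%:E).

Lemma gumbel_abs_meanE : \int[@gumbel_law R]_t `|t|%:E = gumbel_abs_mean%:E.
Proof.
rewrite fineK // ge0_fin_numE ?gumbel_abs_moment_lty //.
by apply: integral_ge0 => t _; rewrite lee_fin.
Qed.

Lemma gumbel_abs_mean_ge0 : (0 <= gumbel_abs_mean)%R.
Proof. by rewrite fine_ge0 //; apply: integral_ge0 => t _; rewrite lee_fin. Qed.

Lemma integral_gumbel_law_addr_abs (a : R) : (0 <= a)%R ->
  \int[@gumbel_law R]_t (a + `|t|)%:E = (a + gumbel_abs_mean)%:E.
Proof.
move=> a0; under eq_integral do rewrite EFinD.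
rewrite ge0_integralD //; last by apply/measurable_EFinP; exact: normr_measurable.
rewrite gumbel_abs_meanE integral_cst // EFinD; congr (_ + _).
by rewrite -[RHS]mule1; congr (_ * _); exact: gumbel_law_setT.
Qed.

Definition abs_linear (C : R) g : \bar R := (C + \sum_k `|g k|)%:E.

Lemma iter_gumbel_E_abs_linear (C : R) s g : (0 <= C)%R -> uniq s ->
  iter_gumbel_E s (abs_linear C) g =
  (C + \sum_(k | k \notin s) `|g k| + (size s)%:R * gumbel_abs_mean)%:E.
Proof.
elim: s g => [|k s IH] g C0 /=.
  by move=> _; rewrite mul0r addr0; congr (_ + _)%:E; apply: eq_bigl.
case/andP=> ks us; under eq_integral => t _.
  rewrite IH // (bigD1 k) //= eqxx.
  have -> : (\sum_(j | (j \notin s) && (j != k)) `|(if j == k then t else g j)|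
      = \sum_(j | j \notin k :: s) `|g j|)%R.
    apply: eq_big => j; first by rewrite in_cons negb_or andbC.
    by case/andP=> _ /negbTE ->.
  rewrite (_ : C + _ + _ = C + \sum_(j | j \notin k :: s) `|g j|
                           + (size s)%:R * gumbel_abs_mean + `|t|)%R; first over.
  by ring.
rewrite integral_gumbel_law_addr_abs; first by congr (_%:E); rewrite -addn1 natrD; ring.
by rewrite !addr_ge0 ?mulr_ge0 ?gumbel_abs_mean_ge0 ?sumr_ge0.
Qed.

Lemma gumbel_E_fin_num (F : (I -> R) -> \bar R) (C : R) : (0 <= C)%R ->
  (forall g, - abs_linear C g <= F g <= abs_linear C g) -> gumbel_E F \is a fin_num.
Proof.
move=> C0 FC; rewrite /gumbel_E.
have lin := iter_gumbel_E_abs_linear C (enum I) (fun=> 0%R) C0 (enum_uniq I).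
have lower := le_iter_gumbel_E (enum I) _ _ (fun g => (andP (FC g)).1) (fun=> 0%R).
have upper := le_iter_gumbel_E (enum I) _ _ (fun g => (andP (FC g)).2) (fun=> 0%R).
rewrite iter_gumbel_EN ?lin in lower; last by move=> g; rewrite lee_fin addr_ge0 ?sumr_ge0.
rewrite lin in upper; rewrite fin_numE -ltNye -ltey.
by rewrite (lt_le_trans _ lower) ?ltNyr // (le_lt_trans upper) ?ltry.
Qed.

End iter_gumbel_E.

Local Close Scope ereal_scope.

Lemma expE_gt0 {R : realType} {e : \bar R} : e \is a fin_num -> 0 < expE e.
Proof. by move=> /fineK <-; rewrite /expE /= expR_gt0. Qed.

Lemma expENy {R : realType} : expE (-oo : \bar R) = 0.
Proof. by []. Qed.

Section gibbs_sampler.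
Context {R : realType} {n : nat} {X : 'I_n -> finType}.
Local Notation gidx := (gidx X).
Local Notation prodX := (prodX X).

Lemma perturbation_abs_le (y : prodX) (m : nat) (g : gidx -> R) :
  `|\sum_(i : 'I_n | (m <= i)%N) g (Tagged X (y i))| <= \sum_k `|g k|.
Proof.
apply: le_trans (ler_norm_sum _ _ _) _.
apply: (@le_trans _ _ (\sum_(i : 'I_n) `|g (Tagged X (y i))|)).
  by rewrite [leRHS](bigID (fun i : 'I_n => (m <= i)%N)) lerDl sumr_ge0.
have tag_inj : {in [set: 'I_n] &, injective (fun i => Tagged X (y i) : gidx)}.
  by move=> i j _ _ /(congr1 tag).
rewrite (_ : \sum_(i : 'I_n) _ = \sum_(i in [set: 'I_n]) `|g (Tagged X (y i))|); last first.
  by apply: eq_bigl => i; rewrite in_setT.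
rewrite -(big_imset (fun k => `|g k|) tag_inj) /=.
set S := (A in \sum_(_ in A) _ <= _).
by rewrite [leRHS](bigID [in S]) /= lerDl sumr_ge0.
Qed.

Variable theta : prodX -> \bar R.
Hypothesis theta_neq_pinfty : forall x, theta x != +oo%E.

Definition perturbed_max (x : prodX) (m : nat) (g : gidx -> R) : \bar R :=
  (\big[maxe/-oo]_(y : prodX | [forall i : 'I_n, (i < m)%N ==> (y i == x i)])
    (theta y + \sum_(i : 'I_n | (m <= i)%N) (g (Tagged X (y i)))%:E))%E.

Lemma MpertE x m : Mpert theta x m = gumbel_E (perturbed_max x m).
Proof. by []. Qed.

Definition theta_abs_bound : R := \sum_y `|fine (theta y)|.

Lemma theta_abs_bound_ge0 : 0 <= theta_abs_bound.
Proof. exact: sumr_ge0. Qed.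

Lemma fine_theta_abs_le y : `|fine (theta y)| <= theta_abs_bound.
Proof. by rewrite /theta_abs_bound (bigD1 y) //= lerDl sumr_ge0. Qed.

Lemma theta_le_bound y : (theta y <= theta_abs_bound%:E)%E.
Proof.
have := fine_theta_abs_le y; have := theta_neq_pinfty y.
case: (theta y) => [r _ /= rC| // |_ _]; last exact: leNye.
by rewrite lee_fin (le_trans (ler_norm r)).
Qed.

Lemma perturbed_max_le x m g : (perturbed_max x m g <= abs_linear theta_abs_bound g)%E.
Proof.
apply: bigmax_le => [|y _]; first exact: leNye.
rewrite /abs_linear EFinD leeD ?theta_le_bound // sumEFin lee_fin.
exact: le_trans (ler_norm _) (perturbation_abs_le _ _ _).
Qed.

Lemma perturbed_max_ge x m g : theta x \is a fin_num ->
  (- abs_linear theta_abs_bound g <= perturbed_max x m g)%E.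
Proof.
move=> /fineK thetaxE.
have xprefix : [forall i : 'I_n, (i < m)%N ==> (x i == x i)].
  by apply/forallP => i; rewrite eqxx implybT.
apply: le_trans (le_bigmax_cond _ _ xprefix); rewrite -thetaxE sumEFin -EFinD lee_fin.
have := fine_theta_abs_le x; have := perturbation_abs_le x m g.
rewrite !ler_norml => /andP[? ?] /andP[? ?]; lra.
Qed.

Lemma Mpert_fin_num x m : theta x \is a fin_num -> Mpert theta x m \is a fin_num.
Proof.
move=> xfin; rewrite MpertE; apply: (gumbel_E_fin_num _ _ theta_abs_bound_ge0) => g.
by rewrite perturbed_max_le perturbed_max_ge.
Qed.

Lemma Mpert_full x m : (n <= m)%N -> Mpert theta x m = theta x.
Proof.
move=> nm; have lt_m (i : 'I_n) : (i < m)%N by exact: leq_trans (ltn_ord i) nm.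
rewrite MpertE /gumbel_E -[RHS](iter_gumbel_E_cst (enum (gidx : finType)) _ (fun=> 0%R)).
congr iter_gumbel_E; apply/funext => g; rewrite /perturbed_max.
rewrite (eq_bigl (pred1 x)) ?big_pred1_eq => [|y].
  by rewrite big_pred0 ?adde0 // => i; rewrite leqNgt lt_m.
apply/forallP/eqP => [yx|-> i]; last by rewrite eqxx implybT.
by apply/ffunP => i; apply/eqP; rewrite (implyP (yx i)) ?lt_m.
Qed.

(* The prefix condition [i < 0] is false, so both sides maximize over all of
   [prodX] and agree by conversion. *)
Lemma Mpert0 x y : Mpert theta x 0 = Mpert theta y 0.
Proof. by []. Qed.

Lemma pass_probE x : Mpert theta x 0 \is a fin_num ->
  pass_prob theta x = expE (theta x) / expE (Mpert theta x 0).
Proof.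
move=> M0fin; have [n0|n_gt0] := posnP n.
  have M0E : Mpert theta x 0 = theta x by rewrite Mpert_full ?n0.
  rewrite /pass_prob big1 => [|j _]; last by have := ltn_ord j; rewrite {2}n0.
  by rewrite -M0E divff // gt_eqF // expE_gt0.
have [xfin|xNfin] := boolP (theta x \is a fin_num).
  rewrite /pass_prob -(big_mkord xpredT (pstep theta x)) telescope_prodf //.
    by rewrite Mpert_full.
  by move=> k _; rewrite gt_eqF // expE_gt0 // Mpert_fin_num.
have thetaxNy : theta x = -oo%E.
  by move: xNfin (theta_neq_pinfty x); case: (theta x).
rewrite thetaxNy expENy mul0r; apply/eqP/prodf_eq0.
have last_lt_n : (n.-1 < n)%N by rewrite ltn_predL.
exists (Ordinal last_lt_n) => //=.
by rewrite /pstep prednK // Mpert_full // thetaxNy expENy mul0r.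
Qed.

End gibbs_sampler.

Theorem theorem3 (R : realType) (n : nat) (X : 'I_n -> finType)
    (theta : prodX X -> \bar R)
    (htheta : forall x, theta x != +oo%E)
    (hZ : 0 < Zpart theta) :
  forall x : prodX X, cond_output_prob theta x = gibbs theta x.
Proof.
have [x0 x0fin] : exists x0, theta x0 \is a fin_num.
  apply: contrapT => noFin; move: hZ; rewrite /Zpart big1 ?ltxx // => y _.
  have := htheta y; case thetayE: (theta y) => [r| |] // _.
  by case: noFin; exists y; rewrite thetayE.
have M0fin x : Mpert theta x 0 \is a fin_num.
  by rewrite (Mpert0 _ x x0) (Mpert_fin_num _ htheta).
pose K := expE (Mpert theta x0 0).
have K_gt0 : 0 < K := expE_gt0 (M0fin x0).
have passE x : pass_prob theta x = expE (theta x) / K.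
  by rewrite (pass_probE _ htheta) // (Mpert0 _ x x0).
have acceptE : accept_prob theta = Zpart theta / K.
  by rewrite /accept_prob (eq_bigr _ (fun y _ => passE y)) -mulr_suml.
move=> x; rewrite /cond_output_prob /gibbs passE acceptE invf_div mulrA.
by rewrite divfK // gt_eqF.
Qed.
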